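(* Let $\|\cdot\|_{(1)},\dots,\|\cdot\|_{(k)}$ be norms on a finite-dimensional real inner product space $V$ and let $0\neq x_0\in V$. Define the optimal weights $\mu_i^\ast=1/\|x_0\|_{(i)}$ and, for $\lambda=(\lambda_1,\dots,\lambda_k)$ with all $\lambda_i\ge 0$, the norms $$\|x\|_{\max,\mu^\ast}=\max_{i\in[k]}\mu_i^\ast\|x\|_{(i)},\qquad \|x\|_{\mathrm{sum},\lambda}=\sum_{i\in[k]}\lambda_i\|x\|_{(i)}.$$ Then for every such $\lambda$, $$\mathrm{cone}\,\partial\|\cdot\|_{\mathrm{sum},\lambda}(x_0)\subseteq\mathrm{cone}\,\partial\|\cdot\|_{\max,\mu^\ast}(x_0).$$ In particular $\delta_{\max}(\mu^\ast)\le\delta_{\mathrm{sum}}(\lambda)$, where $\delta_{\max}(\mu^\ast)=\mathbb{E}_g\big[\inf_{y\in \mathrm{cone}\,\partial\|\cdot\|_{\max,\mu^\ast}(x_0)}\|g-y\|_2^2\big]$ and $\delta_{\mathrm{sum}}(\lambda)=\mathbb{E}_g\big[\inf_{y\in \mathrm{cone}\,\partial\|\cdot\|_{\mathrm{sum},\lambda}(x_0)}\|g-y\|_2^2\big]$ with $g$ a standard Gaussian vector in $V$.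
   Context: $\partial h(x_0)$ denotes the subdifferential of a convex function $h$ at $x_0$; $\mathrm{cone}(S)=\{\tau x:x\in S,\ \tau>0\}$; $[k]=\{1,\dots,k\}$. A standard Gaussian vector has i.i.d. $\mathcal N(0,1)$ coordinates in an orthonormal basis of $V$. *)

(* V = 'rV[R]_n with the standard inner product
   (coordinates in an orthonormal basis), R an arbitrary real field. *)
From HB Require Import structures.
From mathcomp Require Import all_boot all_order all_algebra.
Set Implicit Arguments. Unset Strict Implicit. Unset Printing Implicit Defensive.
Import Order.TTheory GRing.Theory Num.Theory.
Local Open Scope ring_scope.

Definition dotv (R : realFieldType) (n : nat) (x y : 'rV[R]_n) : R :=
  \sum_(j < n) x 0 j * y 0 j.

Definition sqdist (R : realFieldType) (n : nat) (x y : 'rV[R]_n) : R :=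
  dotv (x - y) (x - y).

Definition is_norm (R : realFieldType) (n : nat) (N : 'rV[R]_n -> R) : Prop :=
  [/\ (forall x, 0 <= N x),
      (forall x, N x = 0 -> x = 0),
      (forall (a : R) x, N (a *: x) = `|a| * N x)
    & (forall x y, N (x + y) <= N x + N y)].

Definition subdiff (R : realFieldType) (n : nat) (h : 'rV[R]_n -> R)
    (x0 : 'rV[R]_n) : 'rV[R]_n -> Prop :=
  fun z => forall x, h x0 + dotv z (x - x0) <= h x.

Definition cone (R : realFieldType) (n : nat) (S : 'rV[R]_n -> Prop) :
    'rV[R]_n -> Prop :=
  fun z => exists tau x, 0 < tau /\ S x /\ z = tau *: x.

(* ||x||_{max,mu} = max_i mu_i ||x||_(i)   (0 is the neutral element,
   harmless since all terms are >= 0 when mu >= 0) *)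
Definition norm_max (R : realFieldType) (n k : nat)
    (mu : 'I_k -> R) (N : 'I_k -> 'rV[R]_n -> R) (x : 'rV[R]_n) : R :=
  \big[Num.max/0]_(i < k) (mu i * N i x).

Definition norm_sum (R : realFieldType) (n k : nat)
    (lam : 'I_k -> R) (N : 'I_k -> 'rV[R]_n -> R) (x : 'rV[R]_n) : R :=
  \sum_(i < k) lam i * N i x.

From mathcomp Require Import all_boot all_order all_algebra.
Import Order.TTheory GRing.Theory Num.Theory.
Local Open Scope ring_scope.

(* With c := ||x0||_sum, weighting the i-th term by mu*_i = 1/||x0||_(i) gives
   ||x||_sum <= c ||x||_max,mu* for all x, with equality at x0 (both sides are c).
   Hence c ||.||_max,mu* is a majorant of ||.||_sum touching it at x0, so every
   subgradient s of ||.||_sum at x0 is one of c ||.||_max,mu*, i.e. s / c lies in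
   the subdifferential of ||.||_max,mu* at x0. Taking cones forgets the factor 1/c,
   and the inclusion of cones turns into the reverse inequality of distances. *)

Section ConvexAnalysis.

Variables (R : realFieldType) (n : nat).
Implicit Types (h f : 'rV[R]_n -> R) (s x : 'rV[R]_n).

Lemma dotvZl (a : R) (s v : 'rV[R]_n) : dotv (a *: s) v = a * dotv s v.
Proof. by rewrite /dotv mulr_sumr; apply: eq_bigr => j _; rewrite mxE mulrA. Qed.

Lemma subdiff_majorant h f (x0 : 'rV[R]_n) s :
  (forall x, h x <= f x) -> f x0 <= h x0 -> subdiff h x0 s -> subdiff f x0 s.
Proof.
move=> hf fx0 hs x; apply: le_trans (hf x).
by apply: le_trans (hs x); rewrite lerD2r.
Qed.

Lemma subdiff_scaleV (c : R) h (x0 : 'rV[R]_n) s :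
  0 < c -> subdiff (fun x => c * h x) x0 s -> subdiff h x0 (c^-1 *: s).
Proof.
move=> c_gt0 hs x; rewrite dotvZl -[h x0](mulKf (lt0r_neq0 c_gt0)) -mulrDr.
by rewrite -[h x](mulKf (lt0r_neq0 c_gt0)) ler_pM2l ?invr_gt0.
Qed.

Lemma sub_cone (S T : 'rV[R]_n -> Prop) :
  (forall s, S s -> exists2 c, 0 < c & T (c *: s)) ->
  forall z, cone S z -> cone T z.
Proof.
move=> ST _ [tau [s [tau_gt0 [/ST [c c_gt0 Tcs] ->]]]].
exists (tau / c), (c *: s); split; first by rewrite divr_gt0.
by split=> //; rewrite scalerA mulfVK ?lt0r_neq0.
Qed.

Lemma norm_gt0 (N : 'rV[R]_n -> R) x : is_norm N -> x != 0 -> 0 < N x.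
Proof.
case=> N_ge0 N_eq0 _ _ x_neq0; rewrite lt_def N_ge0 andbT.
by apply: contraNneq x_neq0 => /N_eq0 ->.
Qed.

End ConvexAnalysis.

Section WeightedNorms.

Variables (R : realFieldType) (n k : nat) (N : 'I_k -> 'rV[R]_n -> R).
Variable lam : 'I_k -> R.
Hypothesis lam_ge0 : forall i, 0 <= lam i.

Lemma norm_sum_le_norm_max (mu : 'I_k -> R) x :
  (forall i, 0 < mu i) ->
  norm_sum lam N x <= (\sum_(i < k) lam i / mu i) * norm_max mu N x.
Proof.
move=> mu_gt0; rewrite /norm_sum mulr_suml; apply: ler_sum => i _.
rewrite -[N i x](mulKf (lt0r_neq0 (mu_gt0 i))) mulrA.
apply: ler_wpM2l; first exact: divr_ge0 (lam_ge0 i) (ltW (mu_gt0 i)).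
exact: le_bigmax.
Qed.

Lemma norm_sum_gt0 x :
  (forall i, 0 < N i x) -> (exists i, lam i != 0) -> 0 < norm_sum lam N x.
Proof.
move=> N_gt0 [i lam_neq0].
have lam_gt0 : 0 < lam i by rewrite lt_def lam_neq0 lam_ge0.
rewrite /norm_sum (bigD1 i) //=; apply: ltr_wpDr; last exact: mulr_gt0.
by apply: sumr_ge0 => j _; rewrite mulr_ge0 // ltW.
Qed.

Lemma subdiff_norm_sum_norm_max x0 s :
  (forall i, 0 < N i x0) -> (exists i, lam i != 0) ->
  subdiff (norm_sum lam N) x0 s ->
  subdiff (norm_max (fun i => (N i x0)^-1) N) x0 ((norm_sum lam N x0)^-1 *: s).
Proof.
move=> N_gt0 lam_neq0 hs.
set mu0 := fun i => (N i x0)^-1; set c := norm_sum lam N x0.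
have c_gt0 : 0 < c by apply: norm_sum_gt0.
have weights_sum : \sum_(i < k) lam i / mu0 i = c.
  by apply: eq_bigr => i _; rewrite invrK.
apply: subdiff_scaleV => //; apply: subdiff_majorant hs => [x|].
  by rewrite -weights_sum; apply: norm_sum_le_norm_max => i; rewrite invr_gt0.
rewrite -[leRHS]mulr1 ler_pM2l //.
by apply: bigmax_le => // i _; rewrite mulVf ?lt0r_neq0.
Qed.

End WeightedNorms.

Theorem proposition3 (R : realFieldType) (n k : nat)
    (N : 'I_k -> 'rV[R]_n -> R) (HN : forall i, is_norm (N i))
    (x0 : 'rV[R]_n) (Hx0 : x0 != 0)
    (lam : 'I_k -> R) (Hlam : forall i, 0 <= lam i)
    (Hlam_nz : exists i, lam i != 0) :
  let mu := fun i => (N i x0)^-1 in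
  (forall z, cone (subdiff (norm_sum lam N) x0) z ->
             cone (subdiff (norm_max mu N) x0) z)
  /\
  (forall (g : 'rV[R]_n) (r : R),
     (forall y, cone (subdiff (norm_max mu N) x0) y -> r <= sqdist g y) ->
     (forall y, cone (subdiff (norm_sum lam N) x0) y -> r <= sqdist g y)).
Proof.
move=> mu.
have N_gt0 i : 0 < N i x0 by apply: norm_gt0.
have cone_sub : forall z, cone (subdiff (norm_sum lam N) x0) z ->
                          cone (subdiff (norm_max mu N) x0) z.
  apply: sub_cone => s hs; exists (norm_sum lam N x0)^-1.
    by rewrite invr_gt0 norm_sum_gt0.
  exact: subdiff_norm_sum_norm_max.
by split=> // g r dist_max y /cone_sub; apply: dist_max.
Qed.
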